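(* Let $h>0$, let $B\subset\mathbb Z^8_h$ be bounded, and let $f:\overline B\to\mathbb O$. Then $$\int_{\partial B}\mathbf n\,f\,dS=\int_B D^hf\,dV^h,\qquad \int_{\partial B}f\,\mathbf n\,dS=\int_B f D^h\,dV^h,$$ where $D^hf=\sum_{l=0}^7\mathbf e_l\,\partial_l^hf$ and $fD^h=\sum_{l=0}^7(\partial_l^hf)\,\mathbf e_l$.
   Context: $\mathbb O$ is the real octonion algebra with standard basis $\mathbf e_0=1,\mathbf e_1,\dots,\mathbf e_7$. For $h>0$, $\mathbb Z^8_h=(h\mathbb Z)^8\subset\mathbb R^8$, and $e_0,\dots,e_7$ denote the standard unit vectors of $\mathbb R^8$. For $A\subset\mathbb Z^8_h$, $\chi_A$ is the indicator function of $A$. Difference operators: $\partial_l^{+,h}f(x)=(f(x+he_l)-f(x))/h$, $\partial_l^{-,h}f(x)=(f(x)-f(x-he_l))/h$, $\partial_l^h=\frac12(\partial_l^{+,h}+\partial_l^{-,h})$. Let $N(x)=\{x,x\pm he_0,\dots,x\pm he_7\}$. For $B\subset\mathbb Z^8_h$: $\partial B=\{x\in\mathbb Z^8_h:\ N(x)\cap B\neq\emptyset,\ N(x)\cap(\mathbb Z^8_h\setminus B)\neq\emptyset\}$, $\overline B=B\cup\partial B$. Volume integral: $\int_A g\,dV^h=\sum_{x\in A}g(x)h^8$. For $x\in\partial B$ put $\Sigma(x)=\sum_{l=0}^7\big[(\partial_l^{+,h}\chi_B(x))^2+(\partial_l^{-,h}\chi_B(x))^2\big]$ (nonzero on $\partial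 B$), $s(x)=\frac{h^8}{2}\sqrt{\Sigma(x)}$, $n_l^{\pm}(x)=-2\,\partial_l^{\pm,h}\chi_B(x)/\sqrt{\Sigma(x)}$, $\int_{\partial B}g\,dS=\sum_{x\in\partial B}g(x)s(x)$, and the octonionic outward normal is $\mathbf n=\sum_{l=0}^7\frac12(n_l^++n_l^-)\mathbf e_l$. *)

From HB Require Import structures.
From mathcomp Require Import all_boot all_order all_algebra.
From mathcomp Require Import all_classical all_reals.
Set Implicit Arguments. Unset Strict Implicit. Unset Printing Implicit Defensive.
Import Order.TTheory GRing.Theory Num.Theory.
Local Open Scope classical_set_scope.
Local Open Scope ring_scope.

(* Multiplication table (Baez's convention): e_i^2 = -1 (i <> 0),
   e_i e_j = e_k = - e_j e_i for each cyclic rotation (i,j,k) of the triples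
   below, i.e. e_i e_(i+1) = e_(i+3), indices mod 7 in {1..7}. *)
Definition octo_triples : seq (nat * nat * nat) :=
  [:: (1,2,4); (2,3,5); (3,4,6); (4,5,7); (5,6,1); (6,7,2); (7,1,3)]%N.

Definition octo_oriented : seq (nat * nat * nat) :=
  flatten [seq [:: (t.1.1, t.1.2, t.2); (t.1.2, t.2, t.1.1); (t.2, t.1.1, t.1.2)]
          | t <- octo_triples].

(* octo_tab i j = (s, k) means e_i e_j = (-1)^s e_k *)
Definition octo_tab (i j : nat) : bool * nat :=
  if i == 0%N then (false, j) else
  if j == 0%N then (false, i) else
  if i == j then (true, 0%N) else
  match [seq t.2 | t <- octo_oriented & (t.1.1 == i) && (t.1.2 == j)] with
  | k :: _ => (false, k)
  | [::] =>
    match [seq t.2 | t <- octo_oriented & (t.1.1 == j) && (t.1.2 == i)] with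
    | k :: _ => (true, k)
    | [::] => (false, 0%N)
    end
  end.

Definition octonion (R : realType) := 'rV[R]_8.

Definition obasis (R : realType) (l : 'I_8) : octonion R := delta_mx 0 l.

Definition omul (R : realType) (a b : octonion R) : octonion R :=
  \row_(k < 8) \sum_(i < 8) \sum_(j < 8)
     (if (octo_tab i j).2 == k then
        (-1) ^+ (octo_tab i j).1 * a 0 i * b 0 j else 0).

Definition pt (R : realType) := 'rV[R]_8.

Definition uvec (R : realType) (l : 'I_8) : pt R := delta_mx 0 l.

Definition Zh (R : realType) (h : R) : set (pt R) :=
  [set x | forall l : 'I_8, exists k : int, x 0 l = h * k%:~R].

Definition dplus (R : realType) (V : lmodType R) (h : R) (l : 'I_8)
  (g : pt R -> V) (x : pt R) : V := h^-1 *: (g (x + h *: uvec R l) - g x).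
Definition dminus (R : realType) (V : lmodType R) (h : R) (l : 'I_8)
  (g : pt R -> V) (x : pt R) : V := h^-1 *: (g x - g (x - h *: uvec R l)).
Definition dcen (R : realType) (V : lmodType R) (h : R) (l : 'I_8)
  (g : pt R -> V) (x : pt R) : V := 2^-1 *: (dplus h l g x + dminus h l g x).

Definition Nbhd (R : realType) (h : R) (x : pt R) : set (pt R) :=
  [set y | y = x \/ exists l : 'I_8, y = x + h *: uvec R l \/ y = x - h *: uvec R l].

Definition dboundary (R : realType) (h : R) (B : set (pt R)) : set (pt R) :=
  [set x | Zh h x /\ (Nbhd h x `&` B) !=set0 /\
           (Nbhd h x `&` (Zh h `\` B)) !=set0].

Definition dclosure (R : realType) (h : R) (B : set (pt R)) : set (pt R) :=
  B `|` dboundary h B.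

Definition chi (R : realType) (B : set (pt R)) (x : pt R) : R :=
  if `[< B x >] then 1 else 0.

Definition Sigma (R : realType) (h : R) (B : set (pt R)) (x : pt R) : R :=
  \sum_(l < 8) ((dplus (V := R^o) h l (chi B) x) ^+ 2 + (dminus (V := R^o) h l (chi B) x) ^+ 2).

Definition sweight (R : realType) (h : R) (B : set (pt R)) (x : pt R) : R :=
  h ^+ 8 / 2 * Num.sqrt (Sigma h B x).

Definition nplus (R : realType) (h : R) (B : set (pt R)) (l : 'I_8) (x : pt R) : R :=
  - 2 * dplus (V := R^o) h l (chi B) x / Num.sqrt (Sigma h B x).
Definition nminus (R : realType) (h : R) (B : set (pt R)) (l : 'I_8) (x : pt R) : R :=
  - 2 * dminus (V := R^o) h l (chi B) x / Num.sqrt (Sigma h B x).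

Definition onormal (R : realType) (h : R) (B : set (pt R)) (x : pt R) : octonion R :=
  \sum_(l < 8) (2^-1 * (nplus h B l x + nminus h B l x)) *: obasis R l.

Definition vol_int (R : realType) (h : R) (A : set (pt R)) (g : pt R -> octonion R)
  : octonion R := \sum_(x \in A) (h ^+ 8 *: g x).

Definition surf_int (R : realType) (h : R) (B : set (pt R)) (g : pt R -> octonion R)
  : octonion R := \sum_(x \in dboundary h B) (sweight h B x *: g x).

Definition Dh_left (R : realType) (h : R) (f : pt R -> octonion R) (x : pt R)
  : octonion R := \sum_(l < 8) omul (obasis R l) (dcen h l f x).
Definition Dh_right (R : realType) (h : R) (f : pt R -> octonion R) (x : pt R)
  : octonion R := \sum_(l < 8) omul (dcen h l f x) (obasis R l).

Definition bounded_pts (R : realType) (B : set (pt R)) : Prop :=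
  exists M : R, forall x, B x -> forall l : 'I_8, `|x 0 l| <= M.

From HB Require Import structures.
From mathcomp Require Import all_boot all_order all_algebra.
From mathcomp Require Import all_classical all_reals.
From mathcomp Require Import finmap zify ring lra.
Import Order.TTheory GRing.Theory Num.Theory.
Set Implicit Arguments. Unset Strict Implicit. Unset Printing Implicit Defensive.
Local Open Scope classical_set_scope.
Local Open Scope ring_scope.

(* The weighted normal is a discrete gradient of the indicator of B:
   [s(x) n(x) = - h^8 sum_l (d_l chi_B)(x) e_l], d_l the central difference,
   and this gradient vanishes off the boundary. So for any bilinear product m
   the surface integral of [m(n, f)] equals
   [- h^8 sum_l m(e_l, sum_x (d_l chi_B)(x) f(x))], x ranging over the whole
   lattice, and summation by parts (translation invariance of lattice sums)
   turns the inner sum into [- sum_(x in B) d_l f(x)], which gives the volume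
   integral of [sum_l m(e_l, d_l f)]. Both identities follow, taking for m the
   octonion product and its reverse; all sums are finite because a bounded set
   of lattice points is finite. *)

Section OctonionProduct.
Variable R : realType.

Lemma omul_linearl (c : octonion R) : linear (fun a : octonion R => omul a c).
Proof.
move=> t a b; apply/rowP => k; rewrite /omul !mxE mulr_sumr -big_split.
apply: eq_bigr => i _; rewrite mulr_sumr -big_split; apply: eq_bigr => j _.
rewrite !mxE; move: ((-1) ^+ _) => s; case: ifP => _ /=; [ring | by rewrite mulr0 addr0].
Qed.

Lemma omul_linearr (a : octonion R) : linear (@omul R a).
Proof.
move=> t b c; apply/rowP => k; rewrite /omul !mxE mulr_sumr -big_split.
apply: eq_bigr => i _; rewrite mulr_sumr -big_split; apply: eq_bigr => j _.
rewrite !mxE; move: ((-1) ^+ _) => s; case: ifP => _ /=; [ring | by rewrite mulr0 addr0].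
Qed.

End OctonionProduct.

HB.instance Definition _ (R : realType) :=
  bilinear_isBilinear.Build R (octonion R) (octonion R) (octonion R) *:%R *:%R
    (@omul R) (@omul_linearl R, @omul_linearr R).

Definition omul_rev (R : realType) (a b : octonion R) : octonion R := omul b a.

HB.instance Definition _ (R : realType) :=
  bilinear_isBilinear.Build R (octonion R) (octonion R) (octonion R) *:%R *:%R
    (@omul_rev R) (@omul_linearr R, @omul_linearl R).

Section FinitelySupportedSums.
Variables (T : choiceType) (V : zmodType).

Lemma fsumT_finite (P : set T) (F : T -> V) : finite_set P ->
  (forall x, ~ P x -> F x = 0) ->
  \sum_(x \in [set: T]) F x = \sum_(x <- fset_set P) F x.
Proof.
move=> Pfin F0; apply: fsbigTE => x.
by rewrite in_fset_set // notin_setE; apply: F0.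
Qed.

Lemma fsumTB (P : set T) (F G : T -> V) : finite_set P ->
  (forall x, ~ P x -> F x = 0) -> (forall x, ~ P x -> G x = 0) ->
  \sum_(x \in [set: T]) (F x - G x) =
  \sum_(x \in [set: T]) F x - \sum_(x \in [set: T]) G x.
Proof.
move=> Pfin F0 G0; rewrite !(fsumT_finite Pfin) ?sumrB // => x Px.
by rewrite F0 ?G0 ?subr0.
Qed.

End FinitelySupportedSums.

Lemma fsumTZ (R : nzRingType) (T : choiceType) (V : lmodType R) (P : set T)
    (F : T -> V) (a : R) : finite_set P -> (forall x, ~ P x -> F x = 0) ->
  \sum_(x \in [set: T]) a *: F x = a *: \sum_(x \in [set: T]) F x.
Proof.
move=> Pfin F0; rewrite !(fsumT_finite Pfin) ?scaler_sumr // => x Px.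
by rewrite F0 ?scaler0.
Qed.

Lemma fsumT_translate (T : zmodType) (V : zmodType) (F : T -> V) (w : T) :
  \sum_(x \in [set: T]) F (x + w) = \sum_(x \in [set: T]) F x.
Proof.
rewrite [RHS](reindex_fsbigT (+%R^~ w)) //.
by exists (+%R^~ (- w)) => x; rewrite ?addrK ?subrK.
Qed.

Section Lattice.
Variables (R : realType) (h : R).
Implicit Types (x y z : pt R) (A B : set (pt R)).

Lemma ZhD x y : Zh h x -> Zh h y -> Zh h (x + y).
Proof.
move=> Zx Zy l; have [k xE] := Zx l; have [k' yE] := Zy l.
by exists (k + k'); rewrite mxE xE yE intrD mulrDr.
Qed.

Lemma ZhN x : Zh h x -> Zh h (- x).
Proof. by move=> Zx l; have [k xE] := Zx l; exists (- k); rewrite mxE xE intrN mulrN. Qed.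

Lemma Zh_step l : Zh h (h *: uvec R l).
Proof. by move=> k; exists (k == l)%:Z; rewrite !mxE eqxx. Qed.

Lemma Nbhd_coord x y k : 0 <= h -> Nbhd h x y -> `|y 0 k - x 0 k| <= h.
Proof.
move=> h0 [->|[l [->|->]]]; first by rewrite subrr normr0.
all: rewrite !mxE eqxx /= addrAC subrr add0r ?normrN.
all: by case: (k == l); rewrite ?mulr1 ?mulr0 ?normr0 ?ger0_norm.
Qed.

Lemma dboundary_intro B x y z : Zh h x -> Nbhd h x y -> B y ->
  Nbhd h x z -> Zh h z -> ~ B z -> dboundary h B x.
Proof. by move=> Zx Nxy By Nxz Zz nBz; split=> //; split; [exists y | exists z]. Qed.

Lemma dclosure_sub_Zh B : B `<=` Zh h -> dclosure h B `<=` Zh h.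
Proof. by move=> BZ x [/BZ | []]. Qed.

Lemma dclosure_bounded B : 0 <= h -> bounded_pts B -> bounded_pts (dclosure h B).
Proof.
move=> h0 [M HM]; exists (M + h) => x [Bx k | [_ [[y [Nxy By]] _]] k].
  by rewrite (le_trans (HM x Bx k)) // lerDl.
have -> : x 0 k = y 0 k - (y 0 k - x 0 k) by rewrite opprB addrC subrK.
by rewrite (le_trans (ler_normB _ _)) // lerD ?HM // Nbhd_coord.
Qed.

Lemma Zh_bounded_finite A : 0 < h -> A `<=` Zh h -> bounded_pts A -> finite_set A.
Proof.
move=> h0 AZ [M HM]; pose N := (Num.truncn (M / h)).+1.
have MN : M / h < N%:R by apply: truncnS_gt.
pose coords (g : {ffun 'I_8 -> 'I_(N + N).+1}) : pt R :=
  \row_l (h * ((g l : nat)%:R - N%:R)).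
apply: (@sub_finite_set _ _ (coords @` setT)); last exact/finite_image/finite_finset.
move=> x Ax; have [k xE] := choice (AZ x Ax).
have k_bound l : (- (N%:Z) < k l < N%:Z)%R.
  have : `|(k l)%:~R : R| < N%:R.
    apply: le_lt_trans MN; rewrite ler_pdivlMr // mulrC -(ger0_norm (ltW h0)).
    by rewrite -normrM -xE HM.
  by rewrite ltr_norml => /andP[kl ku]; rewrite -!(ltr_int R) intrN kl ku.
exists [ffun l => inord (absz (k l + N%:Z))] => //; apply/rowP => l.
rewrite !mxE ffunE inordK; last by have := k_bound l; lia.
have kN : (absz (k l + N%:Z))%:Z = k l + N%:Z by have := k_bound l; lia.
have -> : ((absz (k l + N%:Z))%:R : R) = (k l + N%:Z)%:~R by rewrite -kN.
by rewrite xE intrD addrK.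
Qed.

Lemma dclosure_finite B : 0 < h -> B `<=` Zh h -> bounded_pts B ->
  finite_set (dclosure h B).
Proof.
move=> h0 BZ Bbd; apply: Zh_bounded_finite => //; first exact: dclosure_sub_Zh.
exact: dclosure_bounded (ltW h0) Bbd.
Qed.

End Lattice.

Lemma dcenE (R : realType) (V : lmodType R) (h : R) l (g : pt R -> V) x :
  dcen h l g x = (2 * h)^-1 *: (g (x + h *: uvec R l) - g (x - h *: uvec R l)).
Proof. by rewrite /dcen /dplus /dminus -scalerDr addrA subrK scalerA invfM. Qed.

Section Indicator.
Variables (R : realType) (h : R) (B : set (pt R)).
Implicit Types x : pt R.

Lemma chi1 x : B x -> chi B x = 1.
Proof. by move=> Bx; rewrite /chi asboolT. Qed.

Lemma chi0 x : ~ B x -> chi B x = 0.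
Proof. by move=> Bx; rewrite /chi asboolF. Qed.

Lemma dcen_chi_eq0 x l : B `<=` Zh h -> ~ dboundary h B x ->
  dcen (V := R^o) h l (chi B) x = 0.
Proof.
move=> BZ nbx; rewrite dcenE; set w := h *: uvec R l.
suff -> : chi B (x + w) = chi B (x - w) by rewrite subrr scaler0.
have Zw : Zh h w := Zh_step h l.
have Nxp : Nbhd h x (x + w) by right; exists l; left.
have Nxm : Nbhd h x (x - w) by right; exists l; right.
have [Bp|nBp] := pselect (B (x + w)); have [Bm|nBm] := pselect (B (x - w)).
- by rewrite !chi1.
- have Zx : Zh h x by rewrite -(addrK w x); apply: ZhD (BZ _ Bp) (ZhN Zw).
  by case: nbx; apply: dboundary_intro Nxp Bp Nxm (ZhD Zx (ZhN Zw)) nBm.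
- have Zx : Zh h x by rewrite -(subrK w x); apply: ZhD (BZ _ Bm) Zw.
  by case: nbx; apply: dboundary_intro Nxm Bm Nxp (ZhD Zx Zw) nBp.
- by rewrite !chi0.
Qed.

Lemma sqrt_Sigma_eq0 x l : Num.sqrt (Sigma h B x) = 0 ->
  dplus (V := R^o) h l (chi B) x = 0 /\ dminus (V := R^o) h l (chi B) x = 0.
Proof.
move/eqP; rewrite sqrtr_eq0 => S_le0.
have S0 : Sigma h B x = 0.
  by apply/eqP; rewrite eq_le S_le0 sumr_ge0 // => i _; rewrite addr_ge0 ?sqr_ge0.
have := psumr_eq0P (fun i _ => addr_ge0 (sqr_ge0 _) (sqr_ge0 _)) S0 (i := l) isT.
by move: (dplus _ _ _ _) (dminus _ _ _ _) => p q pq0; split; nra.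
Qed.

Lemma sweight_onormal x : sweight h B x *: onormal h B x =
  - h ^+ 8 *: \sum_(l < 8) dcen (V := R^o) h l (chi B) x *: obasis R l.
Proof.
rewrite /onormal !scaler_sumr; apply: eq_bigr => l _; rewrite !scalerA.
congr (_ *: _); rewrite /sweight /nplus /nminus /dcen.
have [s0|s_neq0] := eqVneq (Num.sqrt (Sigma h B x)) 0.
  have [-> ->] := sqrt_Sigma_eq0 l s0.
  by rewrite s0 addr0 scaler0 !(mulr0, mul0r).
move: (dplus _ _ _ _) (dminus _ _ _ _) (Num.sqrt _) s_neq0 => p q s s_neq0.
by rewrite [2^-1 *: _]/GRing.scale /=; field.
Qed.

End Indicator.

Lemma fsumT_dcen_by_parts (R : realType) (U : lmodType R) (h : R) l
    (P : set (pt R)) (g : pt R -> R) (f : pt R -> U) :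
  finite_set P -> (forall x, ~ P x -> g x = 0) ->
  \sum_(x \in [set: pt R]) g x *: dcen h l f x =
  - \sum_(x \in [set: pt R]) dcen (V := R^o) h l g x *: f x.
Proof.
move=> Pfin g0; set w := h *: uvec R l.
have shift v : \sum_(x \in [set: pt R]) g x *: f (x + v) =
               \sum_(x \in [set: pt R]) g (x - v) *: f x.
  by rewrite -[RHS](fsumT_translate _ v); under [RHS]eq_fsbigr do rewrite addrK.
have shift_supp v : finite_set (+%R^~ v @` P) /\
    forall x, ~ (+%R^~ v @` P) x -> g (x - v) *: f x = 0.
  split=> [|x xPv]; first exact: finite_image.
  by rewrite g0 ?scale0r // => Pxv; apply: xPv; exists (x - v); rewrite ?subrK.
have [Pwfin Pw0] := shift_supp w; have [Pmwfin Pmw0] := shift_supp (- w).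
rewrite opprK in Pmw0.
set Q := (+%R^~ w @` P) `|` (+%R^~ (- w) @` P).
have Qfin : finite_set Q by rewrite finite_setU.
have Qw0 x : ~ Q x -> g (x - w) *: f x = 0 by move=> /not_orP[/Pw0].
have Qmw0 x : ~ Q x -> g (x + w) *: f x = 0 by move=> /not_orP[_ /Pmw0].
under eq_fsbigr do rewrite dcenE scalerA mulrC -scalerA scalerBr.
under [in RHS]eq_fsbigr do rewrite dcenE [_ *: (_ - _)]/GRing.scale /= -scalerA scalerBl.
rewrite (fsumTZ _ Pfin) => [|x /g0 ->]; last by rewrite !scale0r subrr.
rewrite (fsumTZ _ Qfin) => [|x Qx]; last by rewrite Qw0 ?Qmw0 ?subrr.
rewrite (fsumTB Pfin) => [|x /g0 ->|x /g0 ->]; rewrite ?scale0r //.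
rewrite (fsumTB Qfin) => [|x /Qmw0 //|x /Qw0 //].
rewrite shift [X in _ - X]shift opprK -[RHS]scalerN; congr (_ *: _).
exact/esym/opprB.
Qed.

Section DiscreteGaussGreen.
Variables (R : realType) (h : R) (B : set (pt R)) (U : lmodType R).
Variables (m : {bilinear octonion R -> U -> octonion R}) (f : pt R -> U).
Hypotheses (h_gt0 : 0 < h) (BZ : B `<=` Zh h) (B_bounded : bounded_pts B).

Let P := dclosure h B.
Let P_finite : finite_set P := dclosure_finite h_gt0 BZ B_bounded.

Lemma fsumT_basis_expand (a : R) (c : 'I_8 -> pt R -> R) (g : 'I_8 -> pt R -> U) :
  (forall l x, ~ P x -> c l x = 0) ->
  \sum_(x \in [set: pt R]) a *: \sum_(l < 8) m (obasis R l) (c l x *: g l x) =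
  a *: \sum_(l < 8) m (obasis R l) (\sum_(x \in [set: pt R]) c l x *: g l x).
Proof.
move=> c0; rewrite (fsumTZ _ P_finite) => [|x Px]; last first.
  by rewrite big1 // => l _; rewrite c0 // scale0r linear0r.
rewrite (fsumT_finite P_finite) => [|x Px]; last first.
  by rewrite big1 // => l _; rewrite c0 // scale0r linear0r.
rewrite exchange_big /=; congr (_ *: _); apply: eq_bigr => l _.
by rewrite (fsumT_finite P_finite) ?linear_sumr // => x /c0 ->; rewrite scale0r.
Qed.

Lemma surf_int_bilinear :
  surf_int h B (fun x => m (onormal h B x) (f x)) =
  - h ^+ 8 *: \sum_(l < 8) m (obasis R l)
      (\sum_(x \in [set: pt R]) dcen (V := R^o) h l (chi B) x *: f x).
Proof.
have integrandE x : sweight h B x *: m (onormal h B x) (f x) =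
    - h ^+ 8 *: \sum_(l < 8) m (obasis R l) (dcen (V := R^o) h l (chi B) x *: f x).
  rewrite -linearZl_LR sweight_onormal linearZl_LR linear_sumlz; congr (_ *: _).
  by apply: eq_bigr => l _; rewrite linearZl_LR linearZr_LR.
rewrite /surf_int (fsbig_widen _ [set: pt R]) // => [|x [_ nbx]]; last first.
  rewrite /preimage /= integrandE big1 ?scaler0 // => l _.
  by rewrite dcen_chi_eq0 // scale0r linear0r.
under eq_fsbigr do rewrite integrandE.
apply: (@fsumT_basis_expand _ (fun l => dcen (V := R^o) h l (chi B)) (fun=> f)).
by move=> l x Px; apply: dcen_chi_eq0 => // bx; apply: Px; right.
Qed.

Lemma vol_int_bilinear :
  vol_int h B (fun x => \sum_(l < 8) m (obasis R l) (dcen h l f x)) =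
  h ^+ 8 *: \sum_(l < 8) m (obasis R l)
      (\sum_(x \in [set: pt R]) chi B x *: dcen h l f x).
Proof.
rewrite /vol_int (eq_fsbigr (fun x => h ^+ 8 *:
    \sum_(l < 8) m (obasis R l) (chi B x *: dcen h l f x))) => [|x Bx]; last first.
  by congr (_ *: _); apply: eq_bigr => l _; rewrite chi1 ?scale1r //; apply/set_mem.
rewrite (fsbig_widen _ [set: pt R]) // => [|x [_ nBx]]; last first.
  by rewrite /preimage /= big1 ?scaler0 // => l _; rewrite chi0 // scale0r linear0r.
apply: (@fsumT_basis_expand _ (fun=> chi B) (dcen h ^~ f)).
by move=> l x Px; apply: chi0 => Bx; apply: Px; left.
Qed.

Theorem discrete_gauss_green :
  surf_int h B (fun x => m (onormal h B x) (f x)) =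
  vol_int h B (fun x => \sum_(l < 8) m (obasis R l) (dcen h l f x)).
Proof.
rewrite surf_int_bilinear vol_int_bilinear scaleNr -scalerN -sumrN.
congr (_ *: _); apply: eq_bigr => l _; rewrite -linearNr.
have B_finite : finite_set B by apply: sub_finite_set P_finite => x Bx; left.
by rewrite (fsumT_dcen_by_parts _ _ _ B_finite) ?opprK // => x /chi0.
Qed.

End DiscreteGaussGreen.

Theorem mainTheorem3 (R : realType) (h : R) (B : set (pt R))
  (f : pt R -> octonion R) :
  0 < h -> B `<=` Zh h -> bounded_pts B ->
  surf_int h B (fun x => omul (onormal h B x) (f x)) = vol_int h B (Dh_left h f) /\
  surf_int h B (fun x => omul (f x) (onormal h B x)) = vol_int h B (Dh_right h f).
Proof.
move=> h_gt0 BZ B_bounded; split.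
  exact: (discrete_gauss_green (@omul R) f h_gt0 BZ B_bounded).
exact: (discrete_gauss_green (@omul_rev R) f h_gt0 BZ B_bounded).
Qed.
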